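(* Let $E$ be a finite set and $\mathcal{W} \subseteq \{+,-,0\}^E$. Then $\mathcal{W}$ is an affine oriented matroid if and only if $\mathcal{W}$ satisfies the following three axioms: (A1) if $X,Y \in \mathcal{W}$ then $X \circ Y \in \mathcal{W}$ and $X \circ (-Y) \in \mathcal{W}$; (A2) if $X,Y \in \mathcal{W}$ with $\underline{X}=\underline{Y}$, then $I_e(X,Y) \cap \mathcal{W} \neq \emptyset$ for every $e \in S(X,Y)$; (A3) $\mathcal{P}(\mathcal{W}) \circ \mathcal{W} \subseteq \mathcal{W}$.
   Context: A sign vector on a finite set $E$ is an element $X \in \{+,-,0\}^E$; write $X^{+}=\{e: X_e=+\}$, $X^-=\{e:X_e=-\}$, support $\underline{X}=X^+\cup X^-$. The opposite $-X$ has $(-X)_e=-X_e$. Composition: $(X\circ Y)_e = X_e$ if $X_e\neq 0$ and $Y_e$ otherwise. Separation set: $S(X,Y)=(X^+\cap Y^-)\cup(X^-\cap Y^+)$. For sets $\mathcal{A},\mathcal{B}$ of sign vectors, $\mathcal{A}\circ\mathcal{B}=\{A\circ B: A\in\mathcal{A},B\in\mathcal{B}\}$. A set $\mathcal{O}\subseteq\{+,-,0\}^{F}$ is (the covector set of) an oriented matroid on $F$ if: (O1) the zero vector lies in $\mathcal{O}$; (O2) $X\in\mathcal{O}\Rightarrow -X\in\mathcal{O}$; (O3) $X,Y\in\mathcal{O}\Rightarrow X\circ Y\in\mathcal{O}$; (O4) if $X,Y\in\mathcal{O}$ with $\underline{X}=\underline{Y}$ and $e\in S(X,Y)$, there is $Z\in\mathcal{O}$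 with $Z_e=0$ and $Z_f=(X\circ Y)_f=(Y\circ X)_f$ for all $f\notin S(X,Y)$. $\mathcal{W}\subseteq\{+,-,0\}^E$ is an affine oriented matroid if there exist an element $g\notin E$ and an oriented matroid $\mathcal{O}$ on $E\cup\{g\}$ such that $\mathcal{W}=\{X|_E : X\in\mathcal{O},\ X_g=+\}$. For $X,Y$ with $\underline{X}=\underline{Y}$ and $X\neq Y$, and $e\in S(X,Y)$: $I_e(X,Y)=\{V\in\{+,-,0\}^E : \underline{V}\subseteq \underline{X}\setminus\{e\},\ V_f=X_f \text{ for all } f\notin S(X,Y)\}$, and $I(X,Y)=\bigcup_{e\in S(X,Y)} I_e(X,Y)$. Sum: $(X+Y)_e=0$ if $e\in S(X,Y)$, and $(X+Y)_e=(X\circ Y)_e$ otherwise. For $\mathcal{W}\subseteq\{+,-,0\}^E$: $\mathrm{sym}(\mathcal{W})=\{V: V\in\mathcal{W}, -V\in\mathcal{W}\}$, $\mathrm{asym}(\mathcal{W})=\{V\in\mathcal{W}: -V\notin\mathcal{W}\}$, and $\mathcal{P}(\mathcal{W})=\{X+(-Y): X,Y\in\mathrm{asym}(\mathcal{W}),\ \underline{X}=\underline{Y},\ I(X,-Y)\cap\mathcal{W}=I(-X,Y)\cap\mathcal{W}=\emptyset\}$. *)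

From HB Require Import structures.
From mathcomp Require Import all_boot.
Set Implicit Arguments. Unset Strict Implicit. Unset Printing Implicit Defensive.

Inductive sign := Pos | Neg | Zer.

Definition sign_enc (s : sign) : 'I_3 :=
  match s with Pos => inord 0 | Neg => inord 1 | Zer => inord 2 end.
Definition sign_dec (i : 'I_3) : sign :=
  match val i with 0 => Pos | 1 => Neg | _ => Zer end.
Lemma sign_encK : cancel sign_enc sign_dec.
Proof. by case; rewrite /sign_dec /= inordK. Qed.
HB.instance Definition _ := Finite.copy sign (can_type sign_encK).

Definition sopp (s : sign) : sign :=
  match s with Pos => Neg | Neg => Pos | Zer => Zer end.

Notation svec E := {ffun E -> sign}.

Section SignVectors.
Variable E : finType.
Implicit Types (X Y V : svec E) (W A B : {set svec E}).

Definition sv_opp X : svec E := [ffun e => sopp (X e)].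
Definition sv_comp X Y : svec E := [ffun e => if X e != Zer then X e else Y e].
Definition supp X : {set E} := [set e | X e != Zer].
Definition sep X Y : {set E} :=
  [set e | ((X e == Pos) && (Y e == Neg)) || ((X e == Neg) && (Y e == Pos))].
Definition set_comp A B : {set svec E} := [set sv_comp a b | a in A, b in B].

(* Oriented matroid (covector axioms O1-O4). *)
Definition is_OM (O : {set svec E}) : Prop :=
  [/\ [ffun _ => Zer] \in O,
      (forall X, X \in O -> sv_opp X \in O),
      (forall X Y, X \in O -> Y \in O -> sv_comp X Y \in O) &
      (forall X Y, X \in O -> Y \in O -> supp X = supp Y ->
         forall e, e \in sep X Y ->
         exists2 Z, Z \in O &
           Z e = Zer /\
           (forall f, f \notin sep X Y -> Z f = sv_comp X Y f /\ Z f = sv_comp Y X f))].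

Definition Ie (e : E) X Y : {set svec E} :=
  [set V | (supp V \subset supp X :\ e) && [forall f, (f \notin sep X Y) ==> (V f == X f)]].
Definition Iset X Y : {set svec E} := \bigcup_(e in sep X Y) Ie e X Y.

Definition sv_sum X Y : svec E :=
  [ffun e => if e \in sep X Y then Zer else sv_comp X Y e].

Definition sym W : {set svec E} := [set V in W | sv_opp V \in W].
Definition asym W : {set svec E} := [set V in W | sv_opp V \notin W].

Definition Pset W : {set svec E} :=
  [set sv_sum X (sv_opp Y) | X in asym W, Y in asym W &
     [&& supp X == supp Y, Iset X (sv_opp Y) :&: W == set0 &
         Iset (sv_opp X) Y :&: W == set0]].

Definition axA1 W : Prop :=
  forall X Y, X \in W -> Y \in W -> sv_comp X Y \in W /\ sv_comp X (sv_opp Y) \in W.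
Definition axA2 W : Prop :=
  forall X Y, X \in W -> Y \in W -> supp X = supp Y ->
    forall e, e \in sep X Y -> Ie e X Y :&: W != set0.
Definition axA3 W : Prop := set_comp (Pset W) W \subset W.

End SignVectors.

(* Affine oriented matroid: the extra element g is modelled by None in option E. *)
Definition restrict_some (E : finType) (X : svec (option E)) : svec E :=
  [ffun e => X (Some e)].

Definition affine_OM (E : finType) (W : {set svec E}) : Prop :=
  exists O : {set svec (option E)}, is_OM O /\
    W = [set restrict_some X | X in O & X None == Pos].

From HB Require Import structures.
From mathcomp Require Import all_boot.
Set Implicit Arguments. Unset Strict Implicit. Unset Printing Implicit Defensive.

(* If [W] comes from an oriented matroid [O], then (A1) and (A2) are (O3) and
   (O4) restricted to [g = +], and eliminating [g] between lifts of [X] and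
   [-Y] yields a covector with [g]-entry [0] whose restriction is [X + (-Y)]:
   a nonzero entry on [S(X,-Y)] could be eliminated once more into an element
   of [I(X,-Y)] or [I(-X,Y)] in [W].
   Conversely, [W] is recovered from its homogenization: [W] with [g = +],
   [-W] with [g = -], and with [g = 0] the vectors [V] such that [V o X] and
   [-V o X] lie in [W] for every [X] in [W]; by (A3) these include [P(W)].
   Elimination between vectors with [g]-entries [+] and [-] is proved by
   induction on [|S(X,-Y)|]: either [X] or [Y] is symmetric, or [X + (-Y)] is
   in [P(W)], or (A2) gives an element of [I(X,-Y)] or [I(-X,Y)] in [W] that
   moves [X] or [Y] closer to the other.  Elimination between two vectors with
   [g]-entry [0] runs the same induction on a pair built from an element of [W]
   whose support outside [supp V] is minimal. *)

Definition sign_eqb (a b : sign) : bool :=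
  match a, b with Pos, Pos | Neg, Neg | Zer, Zer => true | _, _ => false end.
Definition sign_sepb (a b : sign) : bool :=
  match a, b with Pos, Neg | Neg, Pos => true | _, _ => false end.
Definition sign_comp (a b : sign) : sign := if a is Zer then b else a.

(* The equality on [sign] is inherited from ['I_3] and does not compute;
   [sign_eqE] replaces it by [sign_eqb] before case analysis. *)
Lemma sign_eqE (a b : sign) : (a == b) = sign_eqb a b.
Proof. by case: a; case: b; rewrite ?eqxx //; apply/eqP. Qed.

Ltac sign_done := intros; simpl in *; repeat match goal with
  | H : is_true true -> _ |- _ => specialize (H isT)
  | H : is_true false -> _ |- _ => clear H
  | H : ?x = ?x -> _ |- _ => specialize (H erefl)
  | H : true = false -> _ |- _ => clear H
  | H : false = true -> _ |- _ => clear H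
  end; try discriminate; try done.

Section SignVectors.
Variable E : finType.
Implicit Types (X Y Z U V : svec E) (S : {set E}).

Definition agree_off S X Y := forall f, f \notin S -> X f = Y f.

Lemma in_supp X f : (f \in supp X) = ~~ sign_eqb (X f) Zer.
Proof. by rewrite inE sign_eqE. Qed.
Lemma in_sep X Y f : (f \in sep X Y) = sign_sepb (X f) (Y f).
Proof. by rewrite inE !sign_eqE; case: (X f); case: (Y f). Qed.
Lemma sv_compE X Y f : sv_comp X Y f = sign_comp (X f) (Y f).
Proof. by rewrite ffunE sign_eqE; case: (X f). Qed.
Lemma sv_oppE X f : sv_opp X f = sopp (X f).
Proof. by rewrite ffunE. Qed.
Lemma sv_sumE X Y f :
  sv_sum X Y f = if sign_sepb (X f) (Y f) then Zer else sign_comp (X f) (Y f).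
Proof. by rewrite ffunE in_sep sv_compE. Qed.

Lemma sv_oppK X : sv_opp (sv_opp X) = X.
Proof. by apply/ffunP => f; rewrite !sv_oppE; case: (X f). Qed.
Lemma supp_opp X : supp (sv_opp X) = supp X.
Proof. by apply/setP => f; rewrite !in_supp sv_oppE; case: (X f). Qed.
Lemma sv_opp_comp X Y : sv_opp (sv_comp X Y) = sv_comp (sv_opp X) (sv_opp Y).
Proof. by apply/ffunP => f; rewrite !(sv_oppE, sv_compE); case: (X f); case: (Y f). Qed.
Lemma sv_compA X Y Z : sv_comp X (sv_comp Y Z) = sv_comp (sv_comp X Y) Z.
Proof. by apply/ffunP => f; rewrite !sv_compE; case: (X f); case: (Y f). Qed.
Lemma sepC X Y : sep X Y = sep Y X.
Proof. by apply/setP => f; rewrite !in_sep; case: (X f); case: (Y f). Qed.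
Lemma sep_opp X Y : sep (sv_opp X) (sv_opp Y) = sep X Y.
Proof. by apply/setP => f; rewrite !in_sep !sv_oppE; case: (X f); case: (Y f). Qed.
Lemma sep_oppr X Y : sep X (sv_opp Y) = sep (sv_opp X) Y.
Proof. by apply/setP => f; rewrite !in_sep !sv_oppE; case: (X f); case: (Y f). Qed.

Lemma supp_eq_zero X Y : supp X = supp Y -> forall f, sign_eqb (X f) Zer = sign_eqb (Y f) Zer.
Proof. by move/setP=> sXY f; move: (sXY f); rewrite !in_supp => /negb_inj. Qed.

Lemma sep_supp X Y : sep X Y \subset supp X.
Proof. by apply/subsetP => f; rewrite in_sep in_supp; case: (X f); case: (Y f). Qed.

Lemma agree_off_sep X Y : supp X = supp Y -> agree_off (sep X Y) Y X.
Proof.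
move=> /supp_eq_zero sXY f; move: (sXY f); rewrite in_sep.
by case: (X f); case: (Y f).
Qed.

Lemma agree_off_trans S X Y Z : agree_off S X Y -> agree_off S Y Z -> agree_off S X Z.
Proof. by move=> XY YZ f Sf; rewrite XY // YZ. Qed.

Lemma agree_off_opp S X Y : agree_off S X Y -> agree_off S (sv_opp X) (sv_opp Y).
Proof. by move=> XY f /XY; rewrite !sv_oppE => ->. Qed.

Lemma agree_off_sub S S' X Y : S \subset S' -> agree_off S X Y -> agree_off S' X Y.
Proof. by move=> /subsetP sSS' XY f nS'f; apply: XY; apply: contra nS'f; apply: sSS'. Qed.

Lemma IeE e X Y V : V \in Ie e X Y <-> V e = Zer /\ agree_off (sep X Y) V X.
Proof.
rewrite inE; split.
- case/andP => /subsetP sVX /forallP VX; split.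
  + by apply/eqP; apply: contraT => Ve; have := sVX e; rewrite !inE eqxx Ve => /(_ isT).
  + by move=> f nf; move: (VX f); rewrite nf => /eqP.
- case=> Ve VX; apply/andP; split.
  + apply/subsetP => f; rewrite !inE => Vf; apply/andP; split.
    * by apply: contraNneq Vf => ->; rewrite Ve.
    * case: (boolP (f \in sep X Y)) => [|/VX <- //].
      by rewrite in_sep sign_eqE; case: (X f); case: (Y f).
  + by apply/forallP => f; apply/implyP => /VX ->.
Qed.

Lemma Ie_sym e X Y : supp X = supp Y -> Ie e Y X = Ie e X Y.
Proof.
move=> sXY; apply/setP => V; apply/idP/idP => /IeE [Ve VX]; apply/IeE; split => //.
- by apply: agree_off_trans (agree_off_sep sXY); rewrite sepC.
- by apply: agree_off_trans (agree_off_sep (esym sXY)); rewrite sepC.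
Qed.

Lemma Iset_sym X Y : supp X = supp Y -> Iset Y X = Iset X Y.
Proof. by move=> sXY; rewrite /Iset sepC; apply: eq_bigr => e _; apply: Ie_sym. Qed.

Lemma sv_comp_agree X Y : supp X = supp Y -> agree_off (sep X Y) (sv_comp X Y) X.
Proof.
move=> /supp_eq_zero sXY f; move: (sXY f); rewrite sv_compE in_sep.
by case: (X f); case: (Y f).
Qed.

Lemma sv_sum_agree X Y : supp X = supp Y -> agree_off (sep X (sv_opp Y)) (sv_sum X (sv_opp Y)) X.
Proof.
move=> /supp_eq_zero sXY f; move: (sXY f); rewrite sv_sumE in_sep sv_oppE.
by case: (X f); case: (Y f).
Qed.

Lemma sv_sum_sep X Y f : f \in sep X Y -> sv_sum X Y f = Zer.
Proof. by rewrite sv_sumE in_sep => ->. Qed.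

Definition reduces X' Y' X Y :=
  [/\ supp X' = supp X, supp Y' = supp X, sep X' (sv_opp Y') \proper sep X (sv_opp Y),
      agree_off (sep X (sv_opp Y)) X' X & agree_off (sep X (sv_opp Y)) Y' Y].

Lemma reduces_ind (P : svec E -> svec E -> Prop) :
  (forall X Y, (forall X' Y', reduces X' Y' X Y -> P X' Y') -> P X Y) -> forall X Y, P X Y.
Proof.
move=> IHP X Y; have [n] := ubnP #|sep X (sv_opp Y)|; elim: n X Y => // n IHn X Y lt_n.
apply: IHP => X' Y' [_ _ ltXY' _ _]; apply: IHn.
exact: leq_trans (proper_card ltXY') lt_n.
Qed.

Lemma reduces_agree_off X' Y' X Y U :
  reduces X' Y' X Y -> agree_off (sep X' (sv_opp Y')) U X' ->
  agree_off (sep X (sv_opp Y)) U X.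
Proof.
case=> _ _ /properP [ltXY' _] X'X _ UX'.
by apply: agree_off_trans X'X; apply: agree_off_sub UX'.
Qed.

Lemma reduces_left X Y V e1 : supp X = supp Y ->
  V \in Ie e1 X (sv_opp Y) -> e1 \in sep X (sv_opp Y) ->
  reduces (sv_comp V (sv_opp Y)) Y X Y.
Proof.
move=> sXY /IeE [Ve1 VX] e1XY; have sXYf := supp_eq_zero sXY.
have VYX : agree_off (sep X (sv_opp Y)) (sv_comp V (sv_opp Y)) X.
  move=> f /VX; rewrite sv_compE sv_oppE; move: (sXYf f).
  by case: (X f); case: (Y f); case: (V f); sign_done.
split => //.
- apply/setP => f; rewrite !in_supp sv_compE sv_oppE.
  move: (sXYf f) (VX f); rewrite in_sep sv_oppE.
  by case: (X f); case: (Y f); case: (V f); sign_done.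
- apply/properP; split.
  + apply/subsetP => f; move: (sXYf f) (VX f); rewrite !(in_sep, sv_compE, sv_oppE).
    by case: (X f); case: (Y f); case: (V f); sign_done.
  + exists e1 => //; move: e1XY; rewrite !(in_sep, sv_compE, sv_oppE) Ve1.
    by case: (X e1); case: (Y e1).
Qed.

Lemma reduces_right X Y V e1 : supp X = supp Y ->
  V \in Ie e1 (sv_opp X) Y -> e1 \in sep X (sv_opp Y) ->
  reduces X (sv_comp V (sv_opp X)) X Y.
Proof.
move=> sXY VI e1XY; have sYX := esym sXY.
have sepYX : sep Y (sv_opp X) = sep X (sv_opp Y) by rewrite sepC sep_oppr.
rewrite -Ie_sym ?supp_opp // in VI; rewrite -sepYX in e1XY.
case: (reduces_left sYX VI e1XY); rewrite sepYX => sY' _ ltY' Y'Y XY.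
split => //; first by rewrite sY'.
by rewrite [sep X _]sepC -sep_oppr.
Qed.

Lemma agree_off_O4 X Y Z : supp X = supp Y -> agree_off (sep X Y) Z X ->
  forall f, f \notin sep X Y -> Z f = sv_comp X Y f /\ Z f = sv_comp Y X f.
Proof.
move=> sXY ZX f nf; rewrite ZX // sv_comp_agree //; split => //.
by rewrite sv_comp_agree ?(agree_off_sep sXY) // sepC.
Qed.

Lemma agree_off_supp X Y U : agree_off (sep X Y) U X -> supp U \subset supp X.
Proof.
move=> UX; apply/subsetP => f; case: (boolP (f \in sep X Y)) => [/(subsetP (sep_supp X Y)) //|].
by move=> /UX; rewrite !in_supp => ->.
Qed.

Lemma supp_comp_sub U X : supp U \subset supp X -> supp (sv_comp U X) = supp X.
Proof.
move=> /subsetP sUX; apply/setP => f; move: (sUX f); rewrite !in_supp sv_compE.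
by case: (U f); case: (X f); sign_done.
Qed.

Lemma agree_off_comp_same S U X : agree_off S U X -> agree_off S (sv_comp U X) X.
Proof. by move=> UX f /UX; rewrite sv_compE => ->; case: (X f). Qed.

Lemma sep_comp_sub V V' X : supp V = supp V' -> sep (sv_comp V X) (sv_comp V' X) \subset sep V V'.
Proof.
move=> /supp_eq_zero sVV'; apply/subsetP => f; move: (sVV' f); rewrite !in_sep !sv_compE.
by case: (V f); case: (V' f); case: (X f).
Qed.

Lemma supp_compC X Y : supp (sv_comp X Y) = supp (sv_comp Y X).
Proof. by apply/setP => f; rewrite !in_supp !sv_compE; case: (X f); case: (Y f). Qed.

End SignVectors.

Section Extension.
Variable E : finType.
Implicit Types (X Y U : svec E) (Z : svec (option E)) (s t r : sign).

Definition extv s X : svec (option E) := [ffun o => if o is Some e then X e else s].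

Lemma extvP Z : exists s X, Z = extv s X.
Proof. by exists (Z None), (restrict_some Z); apply/ffunP => -[f|]; rewrite !ffunE. Qed.

Lemma extv_None s X : extv s X None = s.
Proof. by rewrite ffunE. Qed.
Lemma extv_Some s X f : extv s X (Some f) = X f.
Proof. by rewrite ffunE. Qed.
Lemma restrict_extv s X : restrict_some (extv s X) = X.
Proof. by apply/ffunP => f; rewrite !ffunE. Qed.
Lemma extv_opp s X : sv_opp (extv s X) = extv (sopp s) (sv_opp X).
Proof. by apply/ffunP => -[f|]; rewrite !ffunE. Qed.
Lemma extv_comp s t X Y : sv_comp (extv s X) (extv t Y) = extv (sign_comp s t) (sv_comp X Y).
Proof. by apply/ffunP => -[f|]; rewrite !(sv_compE, extv_Some, extv_None). Qed.
Lemma extv0 : [ffun _ => Zer] = extv Zer [ffun _ : E => Zer].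
Proof. by apply/ffunP => -[f|]; rewrite !ffunE. Qed.

Lemma in_sep_extv s t X Y o :
  (o \in sep (extv s X) (extv t Y)) = if o is Some f then f \in sep X Y else sign_sepb s t.
Proof. by case: o => [f|]; rewrite !(in_sep, extv_Some, extv_None). Qed.

Lemma supp_extv s t X Y :
  supp (extv s X) = supp (extv t Y) <-> sign_eqb s Zer = sign_eqb t Zer /\ supp X = supp Y.
Proof.
split.
- move=> /supp_eq_zero sZ; split; first by have := sZ None; rewrite !extv_None.
  by apply/setP => f; rewrite !in_supp; have := sZ (Some f); rewrite !extv_Some => ->.
- case=> st /supp_eq_zero sXY; apply/setP => -[f|]; rewrite !in_supp.
  + by rewrite !extv_Some sXY.
  + by rewrite !extv_None st.
Qed.

Lemma agree_off_extv s t r X Y U :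
  agree_off (sep (extv s X) (extv t Y)) (extv r U) (extv s X) <->
  agree_off (sep X Y) U X /\ (~~ sign_sepb s t -> r = s).
Proof.
split.
- move=> UX; split => [f nf|nst].
  + by have := UX (Some f); rewrite in_sep_extv !extv_Some => ->.
  + by have := UX None; rewrite in_sep_extv !extv_None => ->.
- case=> UX rs [f|]; rewrite in_sep_extv ?extv_Some ?extv_None.
  + exact: UX.
  + exact: rs.
Qed.

End Extension.

Section AffineOMAxioms.
Variables (E : finType) (O : {set svec (option E)}) (W : {set svec E}).
Hypothesis OM_O : is_OM O.
Hypothesis defW : W = [set restrict_some X | X in O & X None == Pos].
Implicit Types (X Y U : svec E) (Z : svec (option E)).

Lemma memW X : (X \in W) = (extv Pos X \in O).
Proof.
rewrite defW; apply/idP/idP.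
- case/imsetP => Z; rewrite inE; case: (extvP Z) => s [Y ->].
  by rewrite extv_None restrict_extv sign_eqE; case: s; rewrite /= ?andbT ?andbF // => OY ->.
- move=> OX; apply/imsetP; exists (extv Pos X).
    by rewrite inE OX extv_None eqxx.
  by rewrite restrict_extv.
Qed.

Lemma OM_elim Z1 Z2 o : Z1 \in O -> Z2 \in O -> supp Z1 = supp Z2 -> o \in sep Z1 Z2 ->
  exists2 Z, Z \in O & Z o = Zer /\ agree_off (sep Z1 Z2) Z Z1.
Proof.
case: OM_O => _ _ _ O4 OZ1 OZ2 sZ /(O4 _ _ OZ1 OZ2 sZ) [Z OZ [Zo ZZ]].
by exists Z => //; split => // f nf; case: (ZZ f nf) => -> _; apply: sv_comp_agree sZ f nf.
Qed.

Lemma affine_A1 : axA1 W.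
Proof.
case: OM_O => _ O2 O3 _ X Y; rewrite !memW => OX OY; split.
- by rewrite -[Pos]/(sign_comp Pos Pos) -extv_comp; apply: O3.
- rewrite -[Pos]/(sign_comp Pos Neg) -extv_comp -[Neg]/(sopp Pos) -extv_opp.
  by apply: O3 => //; apply: O2.
Qed.

Lemma affine_A2 : axA2 W.
Proof.
move=> X Y; rewrite !memW => OX OY sXY e eXY.
have sZ : supp (extv Pos X) = supp (extv Pos Y) by apply/supp_extv.
have eZ : Some e \in sep (extv Pos X) (extv Pos Y) by rewrite in_sep_extv.
case: (OM_elim OX OY sZ eZ) => Z OZ []; have [r [U ?]] := extvP Z; subst Z.
rewrite extv_Some => Ue /agree_off_extv [UX /(_ isT) rP]; subst r.
by apply/set0Pn; exists U; rewrite inE memW OZ andbT; apply/IeE.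
Qed.

Lemma Iset_empty_not_opp X B U h : X \in W -> extv Zer U \in O -> agree_off (sep X B) U X ->
  Iset X B :&: W == set0 -> h \in sep X B -> U h != sopp (X h).
Proof.
case: OM_O => _ _ O3 _; rewrite memW => OX OU UX IXB hXB; apply/negP => /eqP Uh.
have OUX : extv Pos (sv_comp U X) \in O by rewrite -[Pos]/(sign_comp Zer Pos) -extv_comp; apply: O3.
have hX : X h != Zer by apply: contraTneq hXB => Xh; rewrite in_sep Xh.
have sUX : supp (extv Pos (sv_comp U X)) = supp (extv Pos X).
  by apply/supp_extv; split => //; apply: supp_comp_sub; apply: agree_off_supp UX.
have hUX : Some h \in sep (extv Pos (sv_comp U X)) (extv Pos X).
  by move: hX; rewrite in_sep_extv in_sep sv_compE Uh sign_eqE; case: (X h).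
case: (OM_elim OUX OX sUX hUX) => Z OZ []; have [r [U' ?]] := extvP Z; subst Z.
rewrite extv_Some => U'h /agree_off_extv [U'UX /(_ isT) rP]; subst r.
suff : U' \in Iset X B :&: W by rewrite (eqP IXB) inE.
rewrite inE memW OZ andbT; apply/bigcupP; exists h => //.
apply/IeE; split => // f nf; have UXf := agree_off_comp_same UX nf.
by rewrite U'UX ?UXf // in_sep UXf; case: (X f).
Qed.

Lemma affine_A3 : axA3 W.
Proof.
case: OM_O => _ O2 O3 _; apply/subsetP => _ /imset2P [_ w /imset2P [X Y XW] + -> wW ->].
rewrite !inE => /andP [/andP [YW _] /and3P [/eqP sXY IXY IYX]].
move: XW; rewrite inE => /andP [XW _].
have OX : extv Pos X \in O by rewrite -memW.
have OY : extv Neg (sv_opp Y) \in O.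
  by rewrite -[Neg]/(sopp Pos) -extv_opp; apply: O2; rewrite -memW.
have sZ : supp (extv Pos X) = supp (extv Neg (sv_opp Y)) by apply/supp_extv; rewrite supp_opp.
have gZ : None \in sep (extv Pos X) (extv Neg (sv_opp Y)) by rewrite in_sep_extv.
case: (OM_elim OX OY sZ gZ) => Z OZ []; have [r [U ?]] := extvP Z; subst Z.
rewrite extv_None => ? /agree_off_extv [UX _]; subst r.
have sepYX : sep Y (sv_opp X) = sep X (sv_opp Y) by rewrite sepC sep_oppr.
have UY : agree_off (sep Y (sv_opp X)) (sv_opp U) Y.
  rewrite sepYX => f nf; rewrite sv_oppE UX // -(agree_off_sep _ nf) ?supp_opp //.
  by rewrite sv_oppE; case: (Y f).
have OmU : extv Zer (sv_opp U) \in O by rewrite -[Zer]/(sopp Zer) -extv_opp; apply: O2.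
rewrite -(Iset_sym (X := sv_opp X)) ?supp_opp // in IYX.
have -> : sv_sum X (sv_opp Y) = U.
  apply/ffunP => h; case: (boolP (h \in sep X (sv_opp Y))) => hXY; last first.
    by rewrite sv_sum_agree // UX.
  have hYX : h \in sep Y (sv_opp X) by rewrite sepYX.
  move: (Iset_empty_not_opp XW OZ UX IXY hXY) (Iset_empty_not_opp YW OmU UY IYX hYX).
  rewrite sv_sum_sep // !sv_oppE !sign_eqE; move: hXY; rewrite in_sep sv_oppE.
  by case: (X h); case: (Y h); case: (U h).
by rewrite memW -[Pos]/(sign_comp Zer Pos) -extv_comp; apply: O3; rewrite -?memW.
Qed.

End AffineOMAxioms.

Section AffineAxiomsOM.
Variables (E : finType) (W : {set svec E}).
Hypotheses (A1 : axA1 W) (A2 : axA2 W) (A3 : axA3 W).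
Implicit Types (X Y U V : svec E) (S : {set E}).

(* The restrictions of the covectors of the homogenization with [g]-entry [0]. *)
Definition infinity : {set svec E} :=
  [set V | [forall X in W, (sv_comp V X \in W) && (sv_comp (sv_opp V) X \in W)]].

Definition homogenization : {set svec (option E)} :=
  [set Z : svec (option E) | match Z None with
           | Pos => restrict_some Z \in W
           | Neg => sv_opp (restrict_some Z) \in W
           | Zer => restrict_some Z \in infinity end].

Lemma infinityP V :
  reflect (forall X, X \in W -> sv_comp V X \in W /\ sv_comp (sv_opp V) X \in W)
          (V \in infinity).
Proof.
rewrite inE; apply: (iffP forallP) => [VW X XW | VW X].
- by have := VW X; rewrite XW => /andP.
- by apply/implyP => /VW [-> ->].
Qed.

Lemma homogenization_extv s X : (extv s X \in homogenization) =
  match s with Pos => X \in W | Neg => sv_opp X \in W | Zer => X \in infinity end.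
Proof. by rewrite inE extv_None restrict_extv. Qed.

Lemma compW X Y : X \in W -> Y \in W -> sv_comp X Y \in W.
Proof. by move=> XW YW; case: (A1 XW YW). Qed.

Lemma comp_oppW X Y : X \in W -> Y \in W -> sv_comp X (sv_opp Y) \in W.
Proof. by move=> XW YW; case: (A1 XW YW). Qed.

Lemma A2_witness X Y e : X \in W -> Y \in W -> supp X = supp Y -> e \in sep X Y ->
  exists U, [/\ U \in W, U e = Zer & agree_off (sep X Y) U X].
Proof.
move=> XW YW sXY eXY; have /set0Pn [U] := A2 XW YW sXY eXY.
by rewrite inE => /andP [/IeE [Ue UX] UW]; exists U.
Qed.

Lemma A2_agree_off S X X' e : X \in W -> X' \in W -> supp X = supp X' ->
  agree_off S X' X -> e \in sep X X' ->
  exists U, [/\ U \in W, U e = Zer & agree_off S U X].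
Proof.
move=> XW X'W sXX' X'X eXX'; have [U [UW Ue UX]] := A2_witness XW X'W sXX' eXX'.
exists U; split => //; apply: agree_off_sub UX; apply/subsetP => f.
by rewrite in_sep; apply: contraTT => /X'X ->; case: (X f).
Qed.

Lemma infinity_opp V : V \in infinity -> sv_opp V \in infinity.
Proof. by move=> /infinityP VW; apply/infinityP => X /VW; rewrite sv_oppK => -[]. Qed.

Lemma sym_infinity V : V \in W -> sv_opp V \in W -> V \in infinity.
Proof. by move=> VW VoW; apply/infinityP => X XW; split; apply: compW. Qed.

Lemma Pset_opp P : P \in Pset W -> sv_opp P \in Pset W.
Proof.
case/imset2P => X Y; rewrite !inE => XA /andP [YA /and3P [/eqP sXY IXY IYX]] ->.
have -> : sv_opp (sv_sum X (sv_opp Y)) = sv_sum Y (sv_opp X).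
  apply/ffunP => f; rewrite sv_oppE !sv_sumE !sv_oppE; move: (supp_eq_zero sXY f).
  by case: (X f); case: (Y f).
apply/imset2P; exists Y X; rewrite ?inE ?YA ?XA //= sXY eqxx /=.
rewrite (Iset_sym (X := sv_opp X)) ?(Iset_sym (X := X) (Y := sv_opp Y)) ?supp_opp //.
by rewrite IXY IYX.
Qed.

Lemma Pset_infinity P : P \in Pset W -> P \in infinity.
Proof.
move=> PP; apply/infinityP => X XW; split.
- exact: (subsetP A3) (imset2_f _ PP XW).
- exact: (subsetP A3) (imset2_f _ (Pset_opp PP) XW).
Qed.

Lemma same_supp_cases X Y : X \in W -> Y \in W -> supp X = supp Y ->
  [\/ sv_opp X \in W, sv_opp Y \in W, sv_sum X (sv_opp Y) \in infinity |
      exists X' Y', [/\ X' \in W, Y' \in W & reduces X' Y' X Y]].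
Proof.
move=> XW YW sXY.
have [XoW|XoN] := boolP (sv_opp X \in W); first by constructor 1.
have [YoW|YoN] := boolP (sv_opp Y \in W); first by constructor 2.
have [IXY|/set0Pn [V]] := eqVneq (Iset X (sv_opp Y) :&: W) set0; last first.
  rewrite inE => /andP [/bigcupP [e eXY VI] VW]; constructor 4.
  exists (sv_comp V (sv_opp Y)), Y.
  by split => //; [apply: comp_oppW | apply: reduces_left sXY VI eXY].
have [IYX|/set0Pn [V]] := eqVneq (Iset (sv_opp X) Y :&: W) set0; last first.
  rewrite inE => /andP [/bigcupP [e eXY VI] VW]; constructor 4.
  exists X, (sv_comp V (sv_opp X)); split => //; first exact: comp_oppW.
  by apply: reduces_right sXY VI _; rewrite sep_oppr.
constructor 3; apply: Pset_infinity; apply/imset2P; exists X Y; rewrite ?inE ?XW ?XoN //.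
by rewrite YW YoN sXY IXY IYX !eqxx.
Qed.

Lemma infinity_agree X Y : X \in W -> Y \in W -> supp X = supp Y ->
  exists2 V, V \in infinity & agree_off (sep X (sv_opp Y)) V X.
Proof.
move: X Y; apply: reduces_ind => X Y IH XW YW sXY.
case: (same_supp_cases XW YW sXY) => [XoW | YoW | PL | [X' [Y' [X'W Y'W red]]]].
- by exists X => //; apply: sym_infinity.
- exists (sv_opp Y); first by apply: sym_infinity; rewrite ?sv_oppK.
  by apply: agree_off_sep; rewrite supp_opp.
- by exists (sv_sum X (sv_opp Y)) => //; apply: sv_sum_agree.
- have [sX' sY' _ _ _] := red.
  have [V VL VX'] := IH X' Y' red X'W Y'W (etrans sX' (esym sY')).
  by exists V => //; apply: reduces_agree_off red VX'.
Qed.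

Lemma sep_elim_homogenization X Y e : X \in W -> Y \in W -> supp X = supp Y ->
  e \in sep X (sv_opp Y) ->
  exists r U, [/\ extv r U \in homogenization, U e = Zer & agree_off (sep X (sv_opp Y)) U X].
Proof.
move: X Y; apply: reduces_ind => X Y IH XW YW sXY eXY.
have sepYX : sep Y (sv_opp X) = sep X (sv_opp Y) by rewrite sepC sep_oppr.
have negY : forall U, agree_off (sep X (sv_opp Y)) U Y ->
    agree_off (sep X (sv_opp Y)) (sv_opp U) X.
  move=> U UY f nf; rewrite sv_oppE UY // -(agree_off_sep _ nf) ?supp_opp //.
  by rewrite sv_oppE; case: (Y f).
case: (same_supp_cases XW YW sXY) => [XoW | YoW | PL | [X' [Y' [X'W Y'W red]]]].
- have eYX : e \in sep Y (sv_opp X) by rewrite sepYX.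
  have [U [UW Ue]] := A2_witness YW XoW (etrans (esym sXY) (esym (supp_opp X))) eYX.
  rewrite sepYX => UY.
  exists Neg, (sv_opp U); rewrite homogenization_extv sv_oppK sv_oppE Ue.
  by split => //; apply: negY.
- have [U [UW Ue UX]] := A2_witness XW YoW (etrans sXY (esym (supp_opp Y))) eXY.
  by exists Pos, U; rewrite homogenization_extv.
- exists Zer, (sv_sum X (sv_opp Y)); rewrite homogenization_extv sv_sum_sep //.
  by split => //; apply: sv_sum_agree.
- have [sX' sY' _ X'X Y'Y] := red.
  (* [e] stays separated unless [X] or [Y] changed its sign at [e]. *)
  have : [|| e \in sep X' (sv_opp Y'), e \in sep X X' | e \in sep Y Y'].
    move: eXY (supp_eq_zero sX' e) (supp_eq_zero sY' e) (supp_eq_zero sXY e).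
    by rewrite !in_sep !sv_oppE; case: (X e); case: (Y e); case: (X' e); case: (Y' e).
  case/or3P => [eXY' | eXX' | eYY'].
  + have [r [U [HU Ue UX']]] := IH X' Y' red X'W Y'W (etrans sX' (esym sY')) eXY'.
    by exists r, U; split => //; apply: reduces_agree_off red UX'.
  + have [U [UW Ue UX]] := A2_agree_off XW X'W (esym sX') X'X eXX'.
    by exists Pos, U; rewrite homogenization_extv.
  + have [U [UW Ue UY]] := A2_agree_off YW Y'W (etrans (esym sXY) (esym sY')) Y'Y eYY'.
    exists Neg, (sv_opp U); rewrite homogenization_extv sv_oppK sv_oppE Ue.
    by split => //; apply: negY.
Qed.

Lemma elim_infinity_comp A A' X e : A \in infinity -> A' \in infinity ->
  supp A = supp A' -> e \in sep A A' -> X \in W ->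
  exists U, [/\ U \in W, U e = Zer & agree_off (sep A A') U (sv_comp A X)].
Proof.
move=> /infinityP AL /infinityP A'L sAA' eAA' XW.
have sAX : supp (sv_comp A X) = supp (sv_comp A' X).
  move: (supp_eq_zero sAA') => sAA'f; apply/setP => f; rewrite !in_supp !sv_compE.
  by move: (sAA'f f); case: (A f); case: (A' f).
have eAX : e \in sep (sv_comp A X) (sv_comp A' X).
  by move: eAA'; rewrite !in_sep !sv_compE; case: (A e); case: (A' e).
have [U [UW Ue UA]] := A2_witness (AL X XW).1 (A'L X XW).1 sAX eAX.
by exists U; split => //; apply: agree_off_sub UA; apply: sep_comp_sub.
Qed.

Section EliminationAtInfinity.
Variables (V V' : svec E) (e : E).
Hypotheses (VL : V \in infinity) (V'L : V' \in infinity).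
Hypotheses (sVV' : supp V = supp V') (eVV' : e \in sep V V').

Definition mu X := #|supp X :\: supp V|.

Definition mu_minimal X := X \in W /\ forall Z, Z \in W -> mu X <= mu Z.

Definition elim_at_infinity :=
  exists2 Z, Z \in infinity & Z e = Zer /\ agree_off (sep V V') Z V.

Lemma elim_at_infinity_of Z : Z \in infinity -> Z e = Zer ->
  (forall f, f \in supp V -> f \notin sep V V' -> Z f = V f) ->
  (forall f, f \notin supp V -> Z f = Zer) -> elim_at_infinity.
Proof.
move=> ZL Ze ZV Z0; exists Z => //; split => // f nf.
have [fV|nfV] := boolP (f \in supp V); first exact: ZV.
by rewrite Z0 //; move: nfV; rewrite in_supp; case: (V f).
Qed.

(* A separation outside [supp V] could be eliminated by (A2) into an element
   of [W] with smaller [mu]. *)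
Lemma mu_minimal_agree X X' : mu_minimal X -> X' \in W -> supp X' = supp X ->
  agree_off (supp V) X' X.
Proof.
case=> XW Xmin X'W sX'X f nfV; apply/eqP; apply: contraT => neq.
have fXX' : f \in sep X X'.
  by move: neq (supp_eq_zero sX'X f); rewrite in_sep sign_eqE; case: (X f); case: (X' f).
have [U [UW Uf UX]] := A2_witness XW X'W (esym sX'X) fXX'.
suff : mu U < mu X by rewrite ltnNge Xmin.
apply: proper_card; apply/properP; split; first by apply: setSD; apply: agree_off_supp UX.
exists f; last by rewrite in_setD (in_supp U) Uf andbF.
by rewrite in_setD nfV (subsetP (sep_supp _ _) _ fXX').
Qed.

Definition elim_pair X Y :=
  [/\ mu_minimal X, Y \in W, supp X = supp Y, X e = Zer /\ Y e = Zer &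
      forall f, f \in supp V -> f \notin sep V V' -> X f = V f /\ Y f = sopp (V f)].

Lemma elim_pair_reduces X Y X' Y' : elim_pair X Y -> X' \in W -> Y' \in W ->
  reduces X' Y' X Y -> elim_pair X' Y'.
Proof.
case=> [[XW Xmin] YW sXY [Xe Ye] XYV] X'W Y'W [sX' sY' _ X'X Y'Y].
have nsep f : X f = V f -> Y f = sopp (V f) -> f \notin sep X (sv_opp Y).
  by rewrite in_sep sv_oppE => -> ->; case: (V f).
have neXY : e \notin sep X (sv_opp Y) by rewrite in_sep Xe.
split => //; first by split => // Z ZW; rewrite /mu sX'; apply: Xmin.
- by rewrite sX'.
- by rewrite X'X // Y'Y.
- by move=> f fV nf; have [Xf Yf] := XYV f fV nf; rewrite X'X ?Y'Y ?nsep.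
Qed.

Lemma elim_pair_infinity X Y : elim_pair X Y -> elim_at_infinity.
Proof.
move: X Y; apply: reduces_ind => X Y IH pXY.
have [[XW Xmin] YW sXY [Xe Ye] XYV] := pXY.
have YX := mu_minimal_agree (conj XW Xmin) YW (esym sXY).
case: (same_supp_cases XW YW sXY) => [XoW | YoW | PL | [X' [Y' [X'W Y'W red]]]].
- have XoX := mu_minimal_agree (conj XW Xmin) XoW (supp_opp X).
  apply: (elim_at_infinity_of (sym_infinity XW XoW)) => // [f fV nf|f nfV].
    by case: (XYV f fV nf).
  by move: (XoX f nfV); rewrite sv_oppE; case: (X f).
- have YoX := mu_minimal_agree (conj XW Xmin) YoW (etrans (supp_opp Y) (esym sXY)).
  apply: (elim_at_infinity_of (infinity_opp (sym_infinity YW YoW))) => [|f fV nf|f nfV].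
  + by rewrite sv_oppE Ye.
  + by case: (XYV f fV nf) => _; rewrite sv_oppE => ->; case: (V f).
  + by move: (YoX f nfV) (YX f nfV); rewrite !sv_oppE; case: (X f); case: (Y f).
- apply: (elim_at_infinity_of PL) => [|f fV nf|f nfV]; rewrite sv_sumE sv_oppE.
  + by rewrite Xe Ye.
  + by case: (XYV f fV nf) => -> ->; case: (V f).
  + by rewrite (YX f nfV); case: (X f).
- exact: IH red (elim_pair_reduces pXY X'W Y'W red).
Qed.

Lemma elim_at_infinity_of_tope X0 : X0 \in W -> elim_at_infinity.
Proof.
move=> X0W; case: (arg_minnP mu X0W) => Xm XmW Xmin.
have [U [UW Ue UV]] := elim_infinity_comp VL V'L sVV' eVV' XmW.
have sVV'o : supp (sv_opp V) = supp (sv_opp V') by rewrite !supp_opp.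
have eVV'o : e \in sep (sv_opp V) (sv_opp V') by rewrite sep_opp.
have [U' [U'W U'e U'V]] :=
  elim_infinity_comp (infinity_opp VL) (infinity_opp V'L) sVV'o eVV'o XmW.
rewrite sep_opp in U'V.
have off_sep f : f \notin sep V V' ->
    sv_comp U U' f = sign_comp (V f) (Xm f) /\ sv_comp U' U f = sign_comp (sopp (V f)) (Xm f).
  by move=> nf; rewrite !sv_compE UV // U'V // !sv_compE sv_oppE; case: (V f); case: (Xm f).
have offV f : f \notin supp V -> f \notin sep V V'.
  by apply: contra; apply: (subsetP (sep_supp _ _)).
(* [U o U'] and [U' o U] are [V] and [-V] on [supp V \ S(V,V')], and [Xm] off [supp V]. *)
apply: (@elim_pair_infinity (sv_comp U U') (sv_comp U' U)); split.
- split; first exact: compW.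
  move=> Z ZW; apply: leq_trans (Xmin Z ZW); apply: subset_leq_card.
  apply/subsetP => f; rewrite !in_setD => /andP [nfV]; rewrite nfV !in_supp.
  by case: (off_sep f (offV f nfV)) => -> _; move: nfV; rewrite in_supp; case: (V f).
- exact: compW.
- exact: supp_compC.
- by rewrite !sv_compE Ue U'e.
- move=> f fV nf; case: (off_sep f nf) => -> ->.
  by move: fV; rewrite in_supp; case: (V f).
Qed.

End EliminationAtInfinity.

Lemma comp_infinity X V : X \in W -> V \in infinity -> sv_comp X V \in W.
Proof.
move=> XW /infinityP /(_ X XW) [VX _].
have -> : sv_comp X V = sv_comp X (sv_comp V X).
  by apply/ffunP => f; rewrite !sv_compE; case: (X f); case: (V f).
exact: compW.
Qed.

Lemma infinity_comp V V' : V \in infinity -> V' \in infinity -> sv_comp V V' \in infinity.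
Proof.
move=> /infinityP VL /infinityP V'L; apply/infinityP => X XW.
rewrite sv_opp_comp -!sv_compA; split.
- by apply: (VL _ (V'L _ XW).1).1.
- by apply: (VL _ (V'L _ XW).2).2.
Qed.

Lemma infinity0 : [ffun _ => Zer] \in infinity.
Proof.
have opp0 : sv_opp [ffun _ => Zer] = [ffun _ : E => Zer] by apply/ffunP => f; rewrite !ffunE.
have comp0 X : sv_comp [ffun _ => Zer] X = X by apply/ffunP => f; rewrite sv_compE ffunE.
by apply/infinityP => X XW; rewrite opp0 comp0.
Qed.

Lemma homogenization_opp Z : Z \in homogenization -> sv_opp Z \in homogenization.
Proof.
have [s [X ->]] := extvP Z; rewrite extv_opp !homogenization_extv.
by case: s => //=; [rewrite sv_oppK | apply: infinity_opp].
Qed.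

Lemma homogenization_comp Z1 Z2 : Z1 \in homogenization -> Z2 \in homogenization ->
  sv_comp Z1 Z2 \in homogenization.
Proof.
have [s [X ->]] := extvP Z1; have [t [Y ->]] := extvP Z2.
rewrite extv_comp !homogenization_extv.
case: s; case: t => //= HX HY; rewrite ?sv_opp_comp.
- exact: compW.
- by rewrite -(sv_oppK Y); apply: comp_oppW.
- exact: comp_infinity.
- exact: comp_oppW.
- exact: compW.
- by apply: comp_infinity => //; apply: infinity_opp.
- by have [] := elimT (infinityP X) HX Y HY.
- by have [] := elimT (infinityP X) HX _ HY.
- exact: infinity_comp.
Qed.

Lemma homogenization_elim_pos X t Y o :
  extv Pos X \in homogenization -> extv t Y \in homogenization ->
  supp (extv Pos X) = supp (extv t Y) ->
  o \in sep (extv Pos X) (extv t Y) ->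
  exists2 Z, Z \in homogenization &
    Z o = Zer /\ agree_off (sep (extv Pos X) (extv t Y)) Z (extv Pos X).
Proof.
rewrite !homogenization_extv => XW HY /supp_extv [st sXY].
case: t st HY => // _ => [YW | YoW].
- case: o => [f|]; rewrite in_sep_extv // => fXY.
  have [U [UW Uf UX]] := A2_witness XW YW sXY fXY.
  exists (extv Pos U); rewrite ?homogenization_extv ?extv_Some //.
  by split => //; apply/agree_off_extv.
- rewrite -[Y]sv_oppK in sXY *; rewrite supp_opp in sXY.
  case: o => [f|] o_sep; rewrite in_sep_extv in o_sep.
  + have [r [U [HU Uf UX]]] := sep_elim_homogenization XW YoW sXY o_sep.
    by exists (extv r U); rewrite ?extv_Some //; split => //; apply/agree_off_extv.
  + have [V VL VX] := infinity_agree XW YoW sXY.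
    exists (extv Zer V); rewrite ?homogenization_extv ?extv_None //.
    by split => //; apply/agree_off_extv.
Qed.

Lemma homogenization_elim Z1 Z2 o : Z1 \in homogenization -> Z2 \in homogenization ->
  supp Z1 = supp Z2 -> o \in sep Z1 Z2 ->
  exists2 Z, Z \in homogenization & Z o = Zer /\ agree_off (sep Z1 Z2) Z Z1.
Proof.
have [s [X ->]] := extvP Z1; have [t [Y ->]] := extvP Z2.
case: s => HX HY sXY oXY.
- exact: homogenization_elim_pos.
- move: (homogenization_opp HX) (homogenization_opp HY); rewrite !extv_opp => HXo HYo.
  have sXYo : supp (extv Pos (sv_opp X)) = supp (extv (sopp t) (sv_opp Y)).
    by rewrite -[Pos]/(sopp Neg) -!extv_opp !supp_opp.
  have oXYo : o \in sep (extv Pos (sv_opp X)) (extv (sopp t) (sv_opp Y)).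
    by rewrite -[Pos]/(sopp Neg) -!extv_opp sep_opp.
  have [Z HZ [Zo ZX]] := homogenization_elim_pos HXo HYo sXYo oXYo.
  exists (sv_opp Z); first exact: homogenization_opp.
  split; first by rewrite sv_oppE Zo.
  by move/agree_off_opp: ZX; rewrite -[Pos]/(sopp Neg) -!extv_opp sep_opp !sv_oppK.
- case/supp_extv: sXY; case: t HY oXY => // HY + _ sXY.
  case: o => [f|]; rewrite in_sep_extv // => fXY.
  rewrite !homogenization_extv in HX HY.
  have [V VL [Vf VX]] : exists2 V, V \in infinity & V f = Zer /\ agree_off (sep X Y) V X.
    (* If [W] is empty, every vector lies in [infinity]. *)
    have [W0|[X0 X0W]] := set_0Vmem W.
      exists [ffun h => if h == f then Zer else X h].
        by apply/infinityP => X0; rewrite W0 inE.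
      split; first by rewrite ffunE eqxx.
      by move=> h nh; rewrite ffunE; case: eqP => // hf; rewrite hf fXY in nh.
    by have [V ? ?] := elim_at_infinity_of_tope HX HY sXY fXY X0W; exists V.
  exists (extv Zer V); rewrite ?homogenization_extv ?extv_Some //.
  by split => //; apply/agree_off_extv.
Qed.

Lemma homogenization_OM : is_OM homogenization.
Proof.
split.
- by rewrite extv0 homogenization_extv; apply: infinity0.
- exact: homogenization_opp.
- exact: homogenization_comp.
- move=> Z1 Z2 HZ1 HZ2 sZ o oZ.
  have [Z HZ [Zo ZZ1]] := homogenization_elim HZ1 HZ2 sZ oZ.
  by exists Z => //; split => //; apply: agree_off_O4.
Qed.

Lemma affine_of_axioms : affine_OM W.
Proof.
exists homogenization; split; first exact: homogenization_OM.
apply/setP => X; apply/idP/imsetP => [XW | [Z]].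
- by exists (extv Pos X); rewrite ?restrict_extv // inE homogenization_extv XW extv_None eqxx.
- have [s [Y ->]] := extvP Z; rewrite inE homogenization_extv extv_None restrict_extv.
  by rewrite sign_eqE; case: s; rewrite /= ?andbF // andbT => YW ->.
Qed.

End AffineAxiomsOM.

Theorem theorem2p1 (E : finType) (W : {set {ffun E -> sign}}) :
  affine_OM W <-> [/\ axA1 W, axA2 W & axA3 W].
Proof.
split.
- case=> O [OM_O defW].
  split; [exact: affine_A1 OM_O defW | exact: affine_A2 OM_O defW | exact: affine_A3 OM_O defW].
- by case=> A1 A2 A3; apply: affine_of_axioms.
Qed.
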